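(* Let $X$ be a connected thin combinatorial $2$-complex that satisfies the Perimeter-reduction hypothesis, and let $\mathcal H\le\mathrm{Aut}(X)$ be finitely generated relative to a finite collection of $0$-cell stabilizers. Then there exists a connected $\mathcal H$-cocompact subcomplex $Y\subset X$ with no missing $3$-shells.
   Context: $\mathrm{Aut}(X)$ is the group of cellular automorphisms. A side at a $1$-cell $x$ is a pair $(R,r)$, $R$ a $2$-cell, $r$ a $1$-cell of $\partial R$ mapping to $x$; $X$ is thin if each $1$-cell has finitely many sides. For a subcomplex $Y$, $\mathrm{Missing}_X(Y,x)$ is the set of sides at $x$ not factoring through $Y$. $Y$ is $\mathcal H$-cocompact if $\mathcal H$-invariant with finitely many $\mathcal H$-orbits of cells; then $\mathrm{per}(Y,\mathcal H)=\sum_i|\mathrm{Missing}_X(Y,y_i)|$ over representatives $y_i$ of the $\mathcal H$-orbits of $1$-cells of $Y$. A piece is a nontrivial path factoring through boundary cycles of two $2$-cells in essentially distinct ways (no compatible homeomorphism of boundary cycles). A missing $3$-shell of $Y$ is a $2$-cell $R\not\subset Y$ with $\partial R=QS$, $Q$ a path in $Y$, $S$ a concatenation of at most $3$ pieces. $\mathcal H$ is finitely generated relative to a finite collection of $0$-cell stabilizers if for some $0$-cells $v_1,\dots,v_n$ and finite $S\subset\mathcal H$, $S\cup\bigcup_i\mathrm{Stab}_{\mathcal H}(v_i)$ generates $\mathcal H$. $X$ satisfies the Perimeter-reduction hypothesis if for every such relatively finitely generated $\mathcal H$ and every connected $\mathcal H$-cocompact $Y\subset X$ having a missing $3$-shell,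 there is a connected $\mathcal H$-cocompact $Y'\subset X$ with $\mathrm{per}(Y',\mathcal H)<\mathrm{per}(Y,\mathcal H)$. *)

From Stdlib Require Import List Arith Bool.
Import ListNotations.
Set Implicit Arguments.

(* A combinatorial 2-complex: 0-cells V, 1-cells E (each with an initial and
   terminal 0-cell), 2-cells F whose attaching map is a closed combinatorial
   path [bd R], a cyclic list of oriented 1-cells ("darts"). *)
Record complex : Type := Complex {
  V : Type; E : Type; F : Type;
  e1 : E -> V; e2 : E -> V;
  bd : F -> list (E * bool) }.

(* (e, true) traverses e from e1 to e2; (e, false) from e2 to e1. *)
Definition dart (X : complex) := (E X * bool)%type.
Definition dsrc {X : complex} (d : dart X) : V X :=
  if snd d then e1 X (fst d) else e2 X (fst d).
Definition dtgt {X : complex} (d : dart X) : V X :=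
  if snd d then e2 X (fst d) else e1 X (fst d).
Definition drev {X : complex} (d : dart X) : dart X := (fst d, negb (snd d)).

Fixpoint path_from {X : complex} (v : V X) (l : list (dart X)) : Prop :=
  match l with
  | [] => True
  | d :: l' => dsrc d = v /\ path_from (dtgt d) l'
  end.
Fixpoint path_end {X : complex} (v : V X) (l : list (dart X)) : V X :=
  match l with
  | [] => v
  | d :: l' => path_end (dtgt d) l'
  end.

Definition wf_complex (X : complex) : Prop :=
  forall R : F X, exists d l, bd X R = d :: l /\
    path_from (dsrc d) (d :: l) /\ path_end (dsrc d) (d :: l) = dsrc d.

Definition connected_cx (X : complex) : Prop :=
  (exists v : V X, True) /\
  forall u w : V X, exists l, path_from u l /\ path_end u l = w.

Definition is_side {X : complex} (x : E X) (R : F X) (i : nat) : Prop :=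
  exists d, nth_error (bd X R) i = Some d /\ fst d = x.

Definition thin (X : complex) : Prop :=
  forall x : E X, exists l : list (F X * nat),
    forall R i, is_side x R i -> In (R, i) l.

(* The circle C_n has vertices 0..n-1 and edges i : i -> i+1 (mod n).
   The isomorphism phi_(a,rev) sends vertex j to a+j (rev=false) or a-j
   (rev=true); edge i then goes to edge a+i (same direction) or to edge
   a-i-1 traversed backwards. *)
Definition vtx_idx (n a : nat) (rev : bool) (j : nat) : nat :=
  if rev then (a + n - j) mod n else (a + j) mod n.
Definition circ_idx (n a : nat) (rev : bool) (i : nat) : nat :=
  if rev then (a + 2 * n - i - 1) mod n else (a + i) mod n.
Definition orient {X : complex} (rev : bool) (o : option (dart X)) :=
  if rev then option_map drev o else o.

Definition circ_iso {X : complex} (L1 L2 : list (dart X)) (a : nat) (rev : bool) : Prop :=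
  length L2 = length L1 /\ a < length L1 /\
  forall i, i < length L1 ->
    nth_error L2 (circ_idx (length L1) a rev i) = orient rev (nth_error L1 i).

(* combinatorial map of the interval graph into the circle C_n (n = |L|),
   starting at circle vertex c, with steps (true = forward, false = backward),
   whose composite with L is the path l *)
Fixpoint lift_ok {X : complex} (L : list (dart X)) (c : nat) (steps : list bool)
    (l : list (dart X)) : Prop :=
  match steps, l with
  | [], [] => True
  | true :: st, d :: l' =>
      nth_error L c = Some d /\ lift_ok L ((c + 1) mod length L) st l'
  | false :: st, d :: l' =>
      nth_error L ((c + length L - 1) mod length L) = Some (drev d) /\
      lift_ok L ((c + length L - 1) mod length L) st l'
  | _, _ => False
  end.
Definition lifts {X : complex} (L : list (dart X)) (s : nat) (steps : list bool)
    (l : list (dart X)) : Prop :=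
  s < length L /\ lift_ok L s steps l.

(* P is a piece: nontrivial, with two lifts to boundary circles of 2-cells
   that are not related by any compatible isomorphism of boundary circles *)
Definition is_piece {X : complex} (P : list (dart X)) : Prop :=
  P <> [] /\
  exists (R1 : F X) s1 st1 (R2 : F X) s2 st2,
    lifts (bd X R1) s1 st1 P /\ lifts (bd X R2) s2 st2 P /\
    ~ (exists a rev, circ_iso (bd X R1) (bd X R2) a rev /\
         s2 = vtx_idx (length (bd X R1)) a rev s1 /\
         st2 = (if rev then map negb st1 else st1)).

Record subcx (X : complex) : Type := Subcx {
  YV : V X -> Prop; YE : E X -> Prop; YF : F X -> Prop }.

Definition is_subcomplex {X : complex} (Y : subcx X) : Prop :=
  (forall e, YE Y e -> YV Y (e1 X e) /\ YV Y (e2 X e)) /\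
  (forall R d, YF Y R -> In d (bd X R) -> YE Y (fst d)).

Definition sub_connected {X : complex} (Y : subcx X) : Prop :=
  (exists v, YV Y v) /\
  forall u w, YV Y u -> YV Y w ->
    exists l, path_from u l /\ path_end u l = w /\ Forall (fun d => YE Y (fst d)) l.

(* missing 3-shell: R not in Y, boundary cycle of R (read from some base
   vertex a in some direction) equals Q ++ S, Q a path in Y, S a
   concatenation of at most 3 pieces *)
Definition missing_3shell {X : complex} (Y : subcx X) (R : F X) : Prop :=
  ~ YF Y R /\
  exists (Q S : list (dart X)) a rev,
    circ_iso (Q ++ S) (bd X R) a rev /\
    (exists d, nth_error (bd X R) a = Some d /\ YV Y (dsrc d)) /\
    Forall (fun d => YE Y (fst d)) Q /\
    exists ps : list (list (dart X)),
      length ps <= 3 /\ Forall is_piece ps /\ S = concat ps.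

Definition has_missing_3shell {X : complex} (Y : subcx X) : Prop :=
  exists R, missing_3shell Y R.

Definition missing {X : complex} (Y : subcx X) (x : E X) (R : F X) (i : nat) : Prop :=
  is_side x R i /\ ~ YF Y R.
Definition missing_card {X : complex} (Y : subcx X) (x : E X) (m : nat) : Prop :=
  exists l : list (F X * nat), NoDup l /\
    (forall R i, In (R, i) l <-> missing Y x R i) /\ length l = m.

Record group : Type := Group {
  G :> Type;
  gmul : G -> G -> G; ginv : G -> G; gone : G;
  gmulA : forall x y z, gmul x (gmul y z) = gmul (gmul x y) z;
  gmul1 : forall x, gmul gone x = x;
  gmulV : forall x, gmul (ginv x) x = gone }.

(* actE g e is the image 1-cell; flip g e says whether its orientation is reversed *)
Record action (X : complex) (Gr : group) : Type := Action {
  actV : Gr -> V X -> V X;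
  actE : Gr -> E X -> E X;
  flip : Gr -> E X -> bool;
  actF : Gr -> F X -> F X }.

Definition actD {X : complex} {Gr : group} (A : action X Gr) (g : Gr) (d : dart X)
  : dart X := (actE A g (fst d), xorb (snd d) (flip A g (fst d))).

(* faithful action of Gr by cellular automorphisms: Gr "is" a subgroup H of Aut(X) *)
Definition is_aut_action {X : complex} {Gr : group} (A : action X Gr) : Prop :=
  (forall v, actV A (gone Gr) v = v) /\
  (forall g h v, actV A (gmul Gr g h) v = actV A g (actV A h v)) /\
  (forall d, actD A (gone Gr) d = d) /\
  (forall g h d, actD A (gmul Gr g h) d = actD A g (actD A h d)) /\
  (forall R, actF A (gone Gr) R = R) /\
  (forall g h R, actF A (gmul Gr g h) R = actF A g (actF A h R)) /\
  (forall g d, dsrc (actD A g d) = actV A g (dsrc d)) /\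
  (forall g R, exists a rev,
      circ_iso (map (actD A g) (bd X R)) (bd X (actF A g R)) a rev) /\
  (forall g, (forall v, actV A g v = v) -> (forall d, actD A g d = d) ->
             (forall R, actF A g R = R) -> g = gone Gr).

Definition rel_fg {X : complex} {Gr : group} (A : action X Gr) : Prop :=
  exists (vs : list (V X)) (S : list Gr),
    forall g : Gr, exists w : list Gr,
      Forall (fun h => In h S \/ In (ginv Gr h) S \/
                       exists v, In v vs /\ actV A h v = v) w /\
      g = fold_right (gmul Gr) (gone Gr) w.

Definition cocompact {X : complex} {Gr : group} (A : action X Gr) (Y : subcx X) : Prop :=
  (forall g v, YV Y v -> YV Y (actV A g v)) /\
  (forall g e, YE Y e -> YE Y (actE A g e)) /\
  (forall g R, YF Y R -> YF Y (actF A g R)) /\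
  (exists lv : list (V X), forall v, YV Y v -> exists r g, In r lv /\ actV A g r = v) /\
  (exists le : list (E X), forall e, YE Y e -> exists r g, In r le /\ actE A g r = e) /\
  (exists lf : list (F X), forall R, YF Y R -> exists r g, In r lf /\ actF A g r = R).

Definition per_is {X : complex} {Gr : group} (A : action X Gr) (Y : subcx X) (n : nat) : Prop :=
  exists reps : list (E X),
    Forall (YE Y) reps /\
    (forall e, YE Y e -> exists r g, In r reps /\ actE A g r = e) /\
    (forall i j r1 r2, nth_error reps i = Some r1 -> nth_error reps j = Some r2 ->
       (exists g, actE A g r1 = r2) -> i = j) /\
    exists ms : list nat, Forall2 (missing_card Y) reps ms /\ n = list_sum ms.

Definition perimeter_reduction (X : complex) : Prop :=
  forall (Gr : group) (A : action X Gr), is_aut_action A -> rel_fg A ->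
  forall Y : subcx X, is_subcomplex Y -> sub_connected Y -> cocompact A Y ->
    has_missing_3shell Y ->
    forall n, per_is A Y n ->
      exists (Y' : subcx X) n', is_subcomplex Y' /\ sub_connected Y' /\
        cocompact A Y' /\ per_is A Y' n' /\ n' < n.

(** Choose a 0-cell v0 and finitely many paths from v0 to the points s v0
    (s in the finite part of the generating set) and to the base points of
    the chosen stabilizers.  The H-orbit of the edges of these paths is an
    H-cocompact graph, and it is connected: every generator moves v0 to a
    0-cell joined to v0 (a stabilizer generator h fixing v sends the path
    v0 ~ v to a path h v0 ~ v), hence so does every element of H.  Thinness
    makes its perimeter a natural number, and the Perimeter-reduction
    hypothesis lowers the perimeter as long as a missing 3-shell exists, so
    well-founded descent on the perimeter ends at a subcomplex with none. *)
From Stdlib Require Import List Classical Wf_nat.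
Import ListNotations.

Lemma gmulV_r (Gr : group) (x : Gr) : gmul Gr x (ginv Gr x) = gone Gr.
Proof.
  rewrite <- (gmul1 Gr (gmul Gr x (ginv Gr x))).
  rewrite <- (gmulV Gr (ginv Gr x)) at 1.
  rewrite <- gmulA, (gmulA Gr (ginv Gr x) x (ginv Gr x)), gmulV, gmul1.
  apply gmulV.
Qed.

Lemma dsrc_drev {X} (d : dart X) : dsrc (drev d) = dtgt d.
Proof. destruct d as [e []]; reflexivity. Qed.

Lemma dtgt_drev {X} (d : dart X) : dtgt (drev d) = dsrc d.
Proof. destruct d as [e []]; reflexivity. Qed.

Lemma path_from_app {X} (u : V X) l1 l2 :
  path_from u l1 -> path_from (path_end u l1) l2 ->
  path_from u (l1 ++ l2) /\ path_end u (l1 ++ l2) = path_end (path_end u l1) l2.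
Proof.
  revert u; induction l1 as [|d l IH]; intros u H1 H2; simpl in *; auto.
  destruct H1 as [Hs Hp]. destruct (IH _ Hp H2). auto.
Qed.

Lemma path_from_rev {X} (u : V X) l : path_from u l ->
  path_from (path_end u l) (rev (map drev l)) /\
  path_end (path_end u l) (rev (map drev l)) = u.
Proof.
  revert u; induction l as [|d l IH]; intros u H; simpl in *; auto.
  destruct H as [Hs Hp]. destruct (IH _ Hp) as [Hrev Hend].
  destruct (path_from_app _ (rev (map drev l)) [drev d] Hrev) as [Happ Happ_end].
  - rewrite Hend. simpl. split; [apply dsrc_drev | exact I].
  - split; [exact Happ |]. rewrite Happ_end, Hend. simpl. rewrite dtgt_drev. auto.
Qed.

Lemma path_from_split {X} (u : V X) l1 d l2 : path_from u (l1 ++ d :: l2) ->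
  path_from u l1 /\ path_end u l1 = dsrc d /\
  path_from u (l1 ++ [d]) /\ path_end u (l1 ++ [d]) = dtgt d.
Proof.
  revert u; induction l1 as [|d' l IH]; intros u H; simpl in *.
  - destruct H; auto.
  - destruct H as [H0 H1]. destruct (IH _ H1) as (?&?&?&?). repeat split; auto.
Qed.

Definition joined {X : complex} (P : E X -> Prop) (u w : V X) : Prop :=
  exists l, path_from u l /\ path_end u l = w /\ Forall (fun d => P (fst d)) l.

Section Joined.
Variables (X : complex) (P : E X -> Prop).

Lemma joined_refl (u : V X) : joined P u u.
Proof. exists []; simpl; auto. Qed.

Lemma joined_trans (u v w : V X) : joined P u v -> joined P v w -> joined P u w.
Proof.
  intros (l1&Hp1&<-&Hl1) (l2&Hp2&<-&Hl2).
  destruct (path_from_app u l1 l2 Hp1 Hp2) as [Hp Hend].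
  exists (l1 ++ l2). repeat split; auto. apply Forall_app; auto.
Qed.

Lemma joined_sym (u v : V X) : joined P u v -> joined P v u.
Proof.
  intros (l&Hp&<-&Hl). destruct (path_from_rev u l Hp).
  exists (rev (map drev l)). repeat split; auto.
  apply Forall_rev, Forall_map. revert Hl. apply Forall_impl. intros [e b]; auto.
Qed.

Lemma joined_path_darts (u : V X) l : path_from u l -> Forall (fun d => P (fst d)) l ->
  forall d, In d l -> joined P u (dsrc d) /\ joined P u (dtgt d).
Proof.
  intros Hp Hl d Hd. apply in_split in Hd. destruct Hd as (l1&l2&->).
  destruct (path_from_split u l1 d l2 Hp) as (Hp1&Hend1&Hp2&Hend2).
  apply Forall_app in Hl. destruct Hl as [Hl1 Hl2]. inversion Hl2; subst.
  split; [exists l1 | exists (l1 ++ [d])]; repeat split; auto.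
  apply Forall_app; auto.
Qed.

End Joined.

Lemma sub_connected_of_hub {X} (Y : subcx X) (v0 : V X) :
  YV Y v0 -> (forall v, YV Y v -> joined (YE Y) v0 v) -> sub_connected Y.
Proof.
  intros Hv0 Hhub. split; [eauto |].
  intros u w Hu Hw. apply (joined_trans _ _ u v0 w).
  - apply joined_sym, Hhub, Hu.
  - apply Hhub, Hw.
Qed.

Section Action.
Variables (X : complex) (Gr : group) (A : action X Gr).
Hypothesis HA : is_aut_action A.

Lemma actV_one v : actV A (gone Gr) v = v.
Proof. destruct HA as (H&_). apply H. Qed.

Lemma actV_mul g h v : actV A (gmul Gr g h) v = actV A g (actV A h v).
Proof. destruct HA as (_&H&_). apply H. Qed.

Lemma dsrc_actD g d : dsrc (actD A g d) = actV A g (dsrc d).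
Proof. destruct HA as (_&_&_&_&_&_&H&_). apply H. Qed.

Lemma actE_one e : actE A (gone Gr) e = e.
Proof. destruct HA as (_&_&H&_). exact (f_equal fst (H (e, true))). Qed.

Lemma actE_mul g h e : actE A (gmul Gr g h) e = actE A g (actE A h e).
Proof. destruct HA as (_&_&_&H&_). exact (f_equal fst (H g h (e, true))). Qed.

Lemma actE_invK g e : actE A (ginv Gr g) (actE A g e) = e.
Proof. rewrite <- actE_mul, gmulV. apply actE_one. Qed.

Lemma actD_drev g d : actD A g (drev d) = drev (actD A g d).
Proof. destruct d as [e []]; unfold actD, drev; simpl; destruct (flip A g e); reflexivity. Qed.

Lemma dtgt_actD g d : dtgt (actD A g d) = actV A g (dtgt d).
Proof. rewrite <- dsrc_drev, <- actD_drev, dsrc_actD, dsrc_drev. reflexivity. Qed.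

Lemma ends_actE g (d : dart X) :
  (e1 X (actE A g (fst d)) = actV A g (dsrc d) /\
   e2 X (actE A g (fst d)) = actV A g (dtgt d)) \/
  (e1 X (actE A g (fst d)) = actV A g (dtgt d) /\
   e2 X (actE A g (fst d)) = actV A g (dsrc d)).
Proof.
  rewrite <- dsrc_actD, <- dtgt_actD. unfold actD.
  destruct (xorb (snd d) (flip A g (fst d))); [left | right]; auto.
Qed.

Lemma path_from_act g u l : path_from u l ->
  path_from (actV A g u) (map (actD A g) l) /\
  path_end (actV A g u) (map (actD A g) l) = actV A g (path_end u l).
Proof.
  revert u; induction l as [|d l IH]; intros u H; simpl in *; auto.
  destruct H as [<- Hp]. rewrite dsrc_actD, dtgt_actD. destruct (IH _ Hp). auto.
Qed.

Lemma joined_act (P : E X -> Prop) (HP : forall g e, P e -> P (actE A g e)) g u v :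
  joined P u v -> joined P (actV A g u) (actV A g v).
Proof.
  intros (l&Hp&<-&Hl). destruct (path_from_act g u l Hp).
  exists (map (actD A g) l). repeat split; auto.
  apply Forall_map. revert Hl. apply Forall_impl. intros d. apply HP.
Qed.

Lemma joined_orbit (P : E X -> Prop) (HP : forall g e, P e -> P (actE A g e))
    (v0 : V X) (vs : list (V X)) (S : list Gr) :
  (forall g : Gr, exists w : list Gr,
     Forall (fun h => In h S \/ In (ginv Gr h) S \/
                      exists v, In v vs /\ actV A h v = v) w /\
     g = fold_right (gmul Gr) (gone Gr) w) ->
  (forall s, In s S -> joined P v0 (actV A s v0)) ->
  (forall v, In v vs -> joined P v0 v) ->
  forall g, joined P v0 (actV A g v0).
Proof.
  intros Hgen HS Hvs.
  assert (Hletter : forall h, (In h S \/ In (ginv Gr h) S \/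
                      exists v, In v vs /\ actV A h v = v) ->
                    joined P v0 (actV A h v0)).
  { intros h [Hh | [Hh | (v&Hv&Hfix)]].
    - auto.
    - apply joined_sym. rewrite <- (actV_one v0) at 2.
      rewrite <- (gmulV_r Gr h), actV_mul. apply (joined_act P HP), HS, Hh.
    - apply (joined_trans _ _ _ v); [apply Hvs, Hv |].
      rewrite <- Hfix at 1. apply joined_sym, (joined_act P HP), Hvs, Hv. }
  intros g. destruct (Hgen g) as (w&Hw&->). clear Hgen.
  induction w as [|h w IH]; simpl.
  - rewrite actV_one. apply joined_refl.
  - inversion Hw; subst. rewrite actV_mul.
    apply (joined_trans _ _ _ (actV A h v0)); auto.
    apply (joined_act P HP). auto.
Qed.

(** The orbit of [v0] is included so that [v0] lies in the graph even when [P] is empty. *)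
Definition orbit_graph (v0 : V X) (P : list (dart X)) : subcx X :=
  Subcx X
    (fun v => (exists g, actV A g v0 = v) \/
              exists g d, In d P /\ (actV A g (dsrc d) = v \/ actV A g (dtgt d) = v))
    (fun e => exists g d, In d P /\ actE A g (fst d) = e)
    (fun _ => False).

Variables (v0 : V X) (P : list (dart X)).

Lemma orbit_graph_invariant g e :
  YE (orbit_graph v0 P) e -> YE (orbit_graph v0 P) (actE A g e).
Proof. intros (h&d&Hd&<-). exists (gmul Gr g h), d. rewrite actE_mul. auto. Qed.

Lemma orbit_graph_subcomplex : is_subcomplex (orbit_graph v0 P).
Proof.
  split; simpl; [| intros R d []].
  intros e (g&d&Hd&<-).
  destruct (ends_actE g d) as [[-> ->] | [-> ->]]; split; right; exists g, d; auto.
Qed.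

Lemma orbit_graph_cocompact : cocompact A (orbit_graph v0 P).
Proof.
  repeat split; simpl.
  - intros h v [(g&<-) | (g&d&Hd&[<- | <-])]; rewrite <- actV_mul; eauto 6.
  - apply orbit_graph_invariant.
  - intros _ _ [].
  - exists (v0 :: flat_map (fun d => [dsrc d; dtgt d]) P).
    intros v [(g&<-) | (g&d&Hd&[<- | <-])]; [exists v0, g; simpl; auto | |];
      eexists; exists g; split; eauto; right; apply in_flat_map; exists d; simpl; auto.
  - exists (map fst P). intros e (g&d&Hd&<-). exists (fst d), g.
    split; auto. apply in_map, Hd.
  - exists []. intros R [].
Qed.

Lemma orbit_graph_connected :
  (forall d, In d P ->
     joined (YE (orbit_graph v0 P)) v0 (dsrc d) /\
     joined (YE (orbit_graph v0 P)) v0 (dtgt d)) ->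
  (forall g, joined (YE (orbit_graph v0 P)) v0 (actV A g v0)) ->
  sub_connected (orbit_graph v0 P).
Proof.
  intros Hdarts Horbit. apply (sub_connected_of_hub _ v0).
  - left. exists (gone Gr). apply actV_one.
  - intros v [(g&<-) | (g&d&Hd&Hv)]; auto.
    apply (joined_trans _ _ _ (actV A g v0)); auto.
    destruct (Hdarts d Hd) as [Hsrc Htgt].
    destruct Hv as [<- | <-]; apply (joined_act _ orbit_graph_invariant); auto.
Qed.

End Action.

Arguments orbit_graph {X Gr} A v0 P.

Lemma connected_cocompact_subcomplex (X : complex) (Gr : group) (A : action X Gr) :
  connected_cx X -> is_aut_action A -> rel_fg A ->
  exists Y : subcx X, is_subcomplex Y /\ sub_connected Y /\ cocompact A Y.
Proof.
  intros [[v0 _] Hconn] HA (vs & S & Hgen).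
  set (targets := map (fun s => actV A s v0) S ++ vs).
  assert (Hpaths : exists ps, Forall (path_from v0) ps /\
            forall t, In t targets -> exists p, In p ps /\ path_end v0 p = t).
  { clear Hgen. induction targets as [|t ts (ps&Hps&Hts)].
    - exists []. split; [constructor | intros t []].
    - destruct (Hconn v0 t) as (p&Hp&Hend). exists (p :: ps).
      split; [constructor; auto |]. intros t' [<- | Ht].
      + exists p; simpl; auto.
      + destruct (Hts t' Ht) as (q&Hq&Hqend). exists q; simpl; auto. }
  destruct Hpaths as (ps & Hps & Htargets).
  set (Y := orbit_graph A v0 (concat ps)).
  assert (Hseed : forall p, In p ps -> Forall (fun d => YE Y (fst d)) p).
  { intros p Hp. apply Forall_forall. intros d Hd.
    exists (gone Gr), d. split; [apply in_concat; eauto | apply (actE_one _ _ _ HA)]. }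
  assert (Htargets_joined : forall t, In t targets -> joined (YE Y) v0 t).
  { intros t Ht. destruct (Htargets t Ht) as (p&Hp&<-). rewrite Forall_forall in Hps.
    exists p. auto. }
  exists Y. split; [| split].
  - apply orbit_graph_subcomplex, HA.
  - apply orbit_graph_connected; [exact HA | |].
    + intros d Hd. apply in_concat in Hd. destruct Hd as (p&Hp&Hd).
      rewrite Forall_forall in Hps.
      exact (joined_path_darts _ _ v0 p (Hps p Hp) (Hseed p Hp) d Hd).
    + apply (joined_orbit _ _ _ HA _ (orbit_graph_invariant _ _ _ HA _ _) v0 vs S Hgen).
      * intros s Hs. apply Htargets_joined, in_or_app. left.
        apply (in_map (fun s => actV A s v0)), Hs.
      * intros v Hv. apply Htargets_joined, in_or_app. right. exact Hv.
  - apply orbit_graph_cocompact, HA.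
Qed.

Lemma exists_nodup_filter {T} (Q : T -> Prop) (l : list T) :
  exists l', NoDup l' /\ forall x, In x l' <-> In x l /\ Q x.
Proof.
  induction l as [|a l (l'&Hnd&Hl')].
  - exists []. split; [constructor |]. simpl; tauto.
  - destruct (classic (Q a /\ ~ In a l')) as [[Qa Hnew] | Hold].
    + exists (a :: l'). split; [constructor; auto |]. intros x; simpl.
      rewrite Hl'. split; [intros [<- | ?]; tauto | intros [[<- | ?] ?]; auto].
    + exists l'. split; auto. intros x; simpl. rewrite Hl'. split; [tauto |].
      intros [[<- | ?] Qx]; [rewrite <- Hl'; apply NNPP; tauto | auto].
Qed.

Lemma missing_card_exists (X : complex) (Y : subcx X) (x : E X) :
  thin X -> exists m, missing_card Y x m.
Proof.
  intros Hthin. destruct (Hthin x) as (sides & Hsides).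
  destruct (exists_nodup_filter (fun p : F X * nat => missing Y x (fst p) (snd p)) sides)
    as (l & Hnd & Hl).
  exists (length l), l. split; [exact Hnd | split; [| reflexivity]].
  intros R i. rewrite (Hl (R, i)). simpl. split; [tauto |].
  intros Hmiss. split; [apply Hsides, Hmiss | exact Hmiss].
Qed.

Lemma Forall2_exists {T U} (Rel : T -> U -> Prop) (l : list T) :
  (forall a, exists b, Rel a b) -> exists lb, Forall2 Rel l lb.
Proof.
  intros H. induction l as [|a l (lb&IH)].
  - exists []; constructor.
  - destruct (H a) as [b Hb]. exists (b :: lb). constructor; auto.
Qed.

Lemma orbit_reps_exists (X : complex) (Gr : group) (A : action X Gr) :
  is_aut_action A -> forall le : list (E X),
  exists reps, incl reps le /\
    (forall r, In r le -> exists r' g, In r' reps /\ actE A g r' = r) /\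
    (forall i j r1 r2, nth_error reps i = Some r1 -> nth_error reps j = Some r2 ->
       (exists g, actE A g r1 = r2) -> i = j).
Proof.
  intros HA le. induction le as [|a le (reps&Hincl&Hcover&Hdistinct)].
  - exists []. repeat split.
    + intros x [].
    + intros r [].
    + intros [] j r1 r2 H; discriminate.
  - destruct (classic (exists r' g, In r' reps /\ actE A g r' = a)) as [Hold | Hnew].
    + exists reps. repeat split; auto.
      * intros x Hx. right; auto.
      * intros r [<- | Hr]; auto.
    + exists (a :: reps). repeat split.
      * intros x [<- | Hx]; [left | right]; auto.
      * intros r [<- | Hr].
        -- exists a, (gone Gr). split; [left; auto | apply (actE_one _ _ _ HA)].
        -- destruct (Hcover r Hr) as (r'&g&Hi&He). exists r', g. simpl; auto.
      * intros [|i] [|j] r1 r2 H1 H2 (g&Hg); simpl in *; auto;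
          [exfalso; apply Hnew .. | f_equal; eauto].
        -- injection H1 as <-. exists r2, (ginv Gr g).
           split; [eapply nth_error_In; eauto |]. subst. apply (actE_invK _ _ _ HA).
        -- injection H2 as <-. exists r1, g. split; [eapply nth_error_In |]; eauto.
Qed.

Lemma per_exists (X : complex) (Gr : group) (A : action X Gr) (Y : subcx X) :
  thin X -> is_aut_action A -> cocompact A Y -> exists n, per_is A Y n.
Proof.
  intros Hthin HA (_ & HinvE & _ & _ & (le & Hle) & _).
  destruct (exists_nodup_filter (YE Y) le) as (leY & _ & HleY).
  destruct (orbit_reps_exists _ _ _ HA leY) as (reps & Hincl & Hcover & Hdistinct).
  destruct (Forall2_exists (missing_card Y) reps (fun x => missing_card_exists X Y x Hthin))
    as (ms & Hms).
  exists (list_sum ms), reps. repeat split.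
  - apply Forall_forall. intros r Hr. apply HleY, Hincl, Hr.
  - intros e He. destruct (Hle e He) as (r & g & Hr & <-).
    assert (HrY : In r leY).
    { apply HleY. split; [exact Hr |].
      rewrite <- (actE_invK _ _ _ HA g r). apply HinvE, He. }
    destruct (Hcover r HrY) as (r' & h & Hr' & <-).
    exists r', (gmul Gr g h). rewrite (actE_mul _ _ _ HA). auto.
  - exact Hdistinct.
  - exists ms. auto.
Qed.

Lemma perimeter_descent (X : complex) (Gr : group) (A : action X Gr) :
  perimeter_reduction X -> is_aut_action A -> rel_fg A ->
  forall n (Y : subcx X), is_subcomplex Y -> sub_connected Y -> cocompact A Y ->
  per_is A Y n ->
  exists Y : subcx X, is_subcomplex Y /\ sub_connected Y /\ cocompact A Y /\
    ~ has_missing_3shell Y.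
Proof.
  intros HPR HA Hfg n. induction n as [n IH] using lt_wf_ind.
  intros Y Hsub Hconn Hcc Hper.
  destruct (classic (has_missing_3shell Y)) as [Hshell | Hnone].
  - destruct (HPR Gr A HA Hfg Y Hsub Hconn Hcc Hshell n Hper)
      as (Y' & n' & Hsub' & Hconn' & Hcc' & Hper' & Hlt).
    exact (IH n' Hlt Y' Hsub' Hconn' Hcc' Hper').
  - exists Y; auto.
Qed.

Theorem lemma3p22 (X : complex) (Gr : group) (A : action X Gr) :
  wf_complex X -> connected_cx X -> thin X -> perimeter_reduction X ->
  is_aut_action A -> rel_fg A ->
  exists Y : subcx X, is_subcomplex Y /\ sub_connected Y /\ cocompact A Y /\
    ~ has_missing_3shell Y.
Proof.
  intros _ Hconn Hthin HPR HA Hfg.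
  destruct (connected_cocompact_subcomplex X Gr A Hconn HA Hfg)
    as (Y & Hsub & Hsc & Hcc).
  destruct (per_exists X Gr A Y Hthin HA Hcc) as (n & Hper).
  exact (perimeter_descent X Gr A HPR HA Hfg n Y Hsub Hsc Hcc Hper).
Qed.
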